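(* Define $f:\mathbb{Z}_{\ge 1}\to\mathbb{R}$ by $f(1)=1$, $f(2)=f(3)=2$, and for $n \ge 4$: $f(n)=4\cdot 3^{n/5-1}$ if $n\equiv 0 \pmod 5$; $f(n)=5\cdot 3^{(n-6)/5}$ if $n\equiv 1 \pmod 5$; $f(n)=2\cdot 3^{(n-2)/5}$ if $n\equiv 2 \pmod 5$; $f(n)=8\cdot 3^{(n-8)/5}$ if $n\equiv 3 \pmod 5$; $f(n)=3^{(n+1)/5}$ if $n\equiv 4 \pmod 5$. Then: (a) for all integers $n,m \ge 2$ with $(n,m)\neq(3,3)$, $f(n)f(m) \ge f(n+m)$; and (b) for all integers $n,m \ge 5$, $f(n-1)f(m-1) \ge f(n+m-1)$. *)

From Stdlib Require Import Reals Arith Lia Lra.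
Open Scope R_scope.

(* On n = 0 (outside the domain) we set f 0 = 0;
   this value is never used by the theorem. For n >= 4 each exponent below is a
   natural number (the numerator is divisible by 5), so nat division is exact. *)
Definition fpaper (n : nat) : R :=
  match n with
  | 0%nat => 0
  | 1%nat => 1
  | 2%nat => 2
  | 3%nat => 2
  | _ =>
    match (n mod 5)%nat with
    | 0%nat => 4 * 3 ^ (n / 5 - 1)
    | 1%nat => 5 * 3 ^ ((n - 6) / 5)
    | 2%nat => 2 * 3 ^ ((n - 2) / 5)
    | 3%nat => 8 * 3 ^ ((n - 8) / 5)
    | _ => 3 ^ ((n + 1) / 5)
    end
  end.

(* For n >= 4 every branch of [fpaper] gains a factor 3 when n grows by 5, so
   f(n+5) = 3 f(n).  Shifting one argument of f(n) f(m) >= f(n+m+k) by 5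
   therefore multiplies both sides by 3, and each inequality reduces to the
   finitely many arguments in the window 4..8, which are checked numerically. *)
From Stdlib Require Import Reals Arith Lia Lra.
Open Scope R_scope.

Lemma div5_add5 (t : nat) : ((t + 5) / 5 = S (t / 5))%nat.
Proof.
  replace (t + 5)%nat with (t + 1 * 5)%nat by lia.
  rewrite Nat.div_add by lia; lia.
Qed.

Lemma fpaper_add5 (n : nat) : (4 <= n)%nat -> fpaper (n + 5) = 3 * fpaper n.
Proof.
  intros Hn.
  destruct n as [|[|[|[|k]]]]; try lia.
  replace (S (S (S (S k))) + 5)%nat with (S (S (S (S (k + 5)))))%nat by lia.
  cbv beta iota delta [fpaper].
  set (x := S (S (S (S k)))). set (y := S (S (S (S (k + 5))))).
  assert (Hy : y = (x + 5)%nat) by (unfold x, y; lia).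
  assert (Hx : (4 <= x)%nat) by (unfold x; lia).
  clearbody x y; subst y.
  pose proof (Nat.div_mod_eq x 5).
  assert (Hmod : ((x + 5) mod 5 = x mod 5)%nat).
  { replace (x + 5)%nat with (x + 1 * 5)%nat by lia. apply Nat.Div0.mod_add. }
  rewrite Hmod.
  destruct (x mod 5)%nat as [|[|[|[|[|r]]]]] eqn:Hr.
  - rewrite div5_add5.
    replace (S (x / 5) - 1)%nat with (S (x / 5 - 1)) by lia.
    simpl pow; ring.
  - replace (x + 5 - 6)%nat with (x - 6 + 5)%nat by lia.
    rewrite div5_add5; simpl pow; ring.
  - replace (x + 5 - 2)%nat with (x - 2 + 5)%nat by lia.
    rewrite div5_add5; simpl pow; ring.
  - replace (x + 5 - 8)%nat with (x - 8 + 5)%nat by lia.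
    rewrite div5_add5; simpl pow; ring.
  - replace (x + 5 + 1)%nat with (x + 1 + 5)%nat by lia.
    rewrite div5_add5; simpl pow; ring.
  - pose proof (Nat.mod_upper_bound x 5 ltac:(lia)); lia.
Qed.

Lemma nat_ind_window5 (P : nat -> Prop) :
  (forall n, (4 <= n <= 8)%nat -> P n) ->
  (forall n, (4 <= n)%nat -> P n -> P (n + 5)%nat) ->
  forall n, (4 <= n)%nat -> P n.
Proof.
  intros Hbase Hstep n.
  induction n as [n IH] using lt_wf_ind; intros Hn.
  destruct (Nat.le_gt_cases n 8).
  - apply Hbase; lia.
  - replace n with (n - 5 + 5)%nat by lia.
    apply Hstep; [lia | apply IH; lia].
Qed.

Lemma nat_window_cases (n : nat) :
  (4 <= n <= 8)%nat -> n = 4%nat \/ n = 5%nat \/ n = 6%nat \/ n = 7%nat \/ n = 8%nat.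
Proof. lia. Qed.

Lemma fpaper_mul_ge_add5 (a b c : nat) :
  (4 <= b)%nat -> (4 <= c)%nat -> fpaper a * fpaper b >= fpaper c ->
  fpaper a * fpaper (b + 5) >= fpaper (c + 5).
Proof.
  intros Hb Hc H.
  rewrite !fpaper_add5 by lia.
  replace (fpaper a * (3 * fpaper b)) with (3 * (fpaper a * fpaper b)) by ring.
  lra.
Qed.

Lemma fpaper_mul_ge_from_window (a k : nat) :
  (forall m, (4 <= m <= 8)%nat -> fpaper a * fpaper m >= fpaper (a + m + k)) ->
  forall m, (4 <= m)%nat -> fpaper a * fpaper m >= fpaper (a + m + k).
Proof.
  intros Hwindow.
  apply nat_ind_window5; [exact Hwindow |].
  intros m Hm IH.
  replace (a + (m + 5) + k)%nat with (a + m + k + 5)%nat by lia.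
  apply fpaper_mul_ge_add5; [lia | lia | exact IH].
Qed.

Lemma fpaper_mul_ge_from_square (k : nat) :
  (forall n m, (4 <= n <= 8)%nat -> (4 <= m <= 8)%nat ->
     fpaper n * fpaper m >= fpaper (n + m + k)) ->
  forall n m, (4 <= n)%nat -> (4 <= m)%nat -> fpaper n * fpaper m >= fpaper (n + m + k).
Proof.
  intros Hsquare n m Hn.
  apply fpaper_mul_ge_from_window; clear m.
  intros m Hm.
  rewrite Rmult_comm, (Nat.add_comm n m).
  revert n Hn; apply fpaper_mul_ge_from_window.
  intros n Hn.
  rewrite Rmult_comm, (Nat.add_comm m n).
  exact (Hsquare n m Hn Hm).
Qed.

Lemma fpaper_submul_ge4 (n m : nat) :
  (4 <= n)%nat -> (4 <= m)%nat -> fpaper n * fpaper m >= fpaper (n + m).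
Proof.
  intros Hn Hm.
  rewrite <- (Nat.add_0_r (n + m)).
  revert n m Hn Hm; apply fpaper_mul_ge_from_square.
  intros n m Hn Hm.
  destruct (nat_window_cases n Hn) as [->|[->|[->|[->| ->]]]];
  destruct (nat_window_cases m Hm) as [->|[->|[->|[->| ->]]]];
  simpl; lra.
Qed.

Lemma fpaper_submul_succ_ge4 (n m : nat) :
  (4 <= n)%nat -> (4 <= m)%nat -> fpaper n * fpaper m >= fpaper (n + m + 1).
Proof.
  revert n m; apply fpaper_mul_ge_from_square.
  intros n m Hn Hm.
  destruct (nat_window_cases n Hn) as [->|[->|[->|[->| ->]]]];
  destruct (nat_window_cases m Hm) as [->|[->|[->|[->| ->]]]];
  simpl; lra.
Qed.

Lemma fpaper_submul_small (a m : nat) :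
  (2 <= a <= 3)%nat -> (4 <= m)%nat -> fpaper a * fpaper m >= fpaper (a + m).
Proof.
  intros Ha Hm.
  rewrite <- (Nat.add_0_r (a + m)).
  revert m Hm; apply fpaper_mul_ge_from_window.
  intros m Hm.
  assert (a = 2%nat \/ a = 3%nat) as [-> | ->] by lia;
  destruct (nat_window_cases m Hm) as [->|[->|[->|[->| ->]]]];
  simpl; lra.
Qed.

Lemma fpaper_submul_ge2_ge4 (n m : nat) :
  (2 <= n)%nat -> (4 <= m)%nat -> fpaper n * fpaper m >= fpaper (n + m).
Proof.
  intros Hn Hm.
  destruct (Nat.le_gt_cases 4 n).
  - apply fpaper_submul_ge4; lia.
  - apply fpaper_submul_small; lia.
Qed.

Theorem lemma4p1 :
  (forall n m : nat, (2 <= n)%nat -> (2 <= m)%nat -> ~ (n = 3%nat /\ m = 3%nat) ->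
     fpaper n * fpaper m >= fpaper (n + m)) /\
  (forall n m : nat, (5 <= n)%nat -> (5 <= m)%nat ->
     fpaper (n - 1) * fpaper (m - 1) >= fpaper (n + m - 1)).
Proof.
  split.
  - intros n m Hn Hm Hnot33.
    destruct (Nat.le_gt_cases 4 m); [apply fpaper_submul_ge2_ge4; lia |].
    destruct (Nat.le_gt_cases 4 n).
    + rewrite Rmult_comm, Nat.add_comm.
      apply fpaper_submul_ge2_ge4; lia.
    + assert (n = 2%nat \/ n = 3%nat) as [-> | ->] by lia;
      assert (m = 2%nat \/ m = 3%nat) as [-> | ->] by lia;
      (simpl; lra) || tauto.
  - intros n m Hn Hm.
    replace (n + m - 1)%nat with (n - 1 + (m - 1) + 1)%nat by lia.
    apply fpaper_submul_succ_ge4; lia.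
Qed.
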